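(* Let $k\ge1$, and let $\mathcal P=\{p_1,\dots,p_{k^2}\}$ be a family of real polynomials in the commuting variables $x_1,\dots,x_{2k^2}$ admitting an nc representation $p(X,Y)$ of degree $d>1$. Let $t\ge2$ and suppose $$p(X,Y)=e_1(XY)^t+e_2(YX)^t+e_3X^{2t}+e_4Y^{2t}+q(X,Y),$$ where $q$ contains no scalar multiples of $(XY)^t,(YX)^t,X^{2t},Y^{2t}$, and $e_1,e_2,e_3,e_4$ are pairwise distinct real numbers. Then, counting terms over all polynomials of the family, the family contains: exactly $k^2-k$ terms of the form $e_1x_u^tx_v^t$ with $u\ne v$ if $e_1\ne0$; exactly $k^2-k$ such terms with coefficient $e_2$ if $e_2\ne0$; exactly $k^2-k$ such terms with coefficient $e_3$ if $e_3\ne0$; exactly $k^2-k$ such terms with coefficient $e_4$ if $e_4\ne0$; exactly $k$ such terms with coefficient $\varphi(t,t)$ if $\varphi(t,t)\ne0$; exactly $k$ one letter terms $e_3x_u^{2t}$ if $e_3\ne0$; and exactly $k$ one letter terms $e_4x_u^{2t}$ if $e_4\ne0$. These account for all one letter terms of degree $2t$ and all two letter terms of the form $cx_u^tx_v^t$ ($u\ne v$, $c\ne0$) in the family. Moreover, each of the $k$ polynomials on the diagonal of the array $p(X,Y)$ contains $(\chi(e_1)+\chi(e_2)+\chi(e_3)+\chi(e_4))(k-1)$ terms of the form $cx_u^tx_v^t$ ($u\ne v$) built from off-diagonal entries of $X,Y$ and $\chi(\varphi(t,t))$ such terms built from diagonal entries, as well as exactly one one letter term of degree $2t$ with coefficient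 $e_3$ and exactly one with coefficient $e_4$, whose letters are diagonal entries; and no off-diagonal polynomial of the array contains any term of the form $cx_u^tx_v^t$ with $u\ne v$, $c\ne0$.
   Context: The family $\mathcal P$ admits an nc representation $p(X,Y)$ if there are $k\times k$ matrices $X,Y$ whose $2k^2$ entries are the variables $x_1,\dots,x_{2k^2}$, each used exactly once, and a noncommutative polynomial $p$ in two letters with real coefficients such that the matrix $p(X,Y)$ is a $k\times k$ array whose entries are $p_1,\dots,p_{k^2}$, each exactly once. A ''term'' of a polynomial means a monomial with its nonzero coefficient after collecting like terms. $\varphi(i,j)$ is the sum of coefficients of all monomials of $p$ of degree $i$ in $X$ and $j$ in $Y$. $\chi(a)=1$ if $a\ne0$ and $\chi(a)=0$ if $a=0$. *)

From HB Require Import structures.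
From mathcomp Require Import all_boot all_order all_algebra.
From mathcomp Require Import reals.
From mathcomp Require Import mpoly.

Set Implicit Arguments.
Unset Strict Implicit.
Unset Printing Implicit Defensive.

Import GRing.Theory Num.Theory.
Local Open Scope ring_scope.

(* A word is a seq bool: true = X, false = Y.  An nc polynomial is a   *)
(* finitely supported coefficient function on words (like terms are    *)
(* thus already collected); [ncbound] bounds the length of the words   *)
(* carrying a nonzero coefficient.                                     *)
Record ncpoly (R : nzRingType) := NCPoly {
  nccoef : seq bool -> R;
  ncbound : nat;
  ncboundP : forall w, (ncbound < size w)%N -> nccoef w = 0 }.

Definition ncdeg (R : nzRingType) (p : ncpoly R) (d : nat) : Prop :=
  (exists w, nccoef p w != 0 /\ size w = d) /\
  (forall w, nccoef p w != 0 -> (size w <= d)%N).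

Definition ncphi (R : nzRingType) (p : ncpoly R) (i j : nat) : R :=
  \sum_(w : (i + j).-tuple bool | count id w == i) nccoef p w.

Definition wXY (t : nat) : seq bool := flatten (nseq t [:: true; false]).
Definition wYX (t : nat) : seq bool := flatten (nseq t [:: false; true]).
Definition wX (t : nat) : seq bool := nseq (2 * t) true.
Definition wY (t : nat) : seq bool := nseq (2 * t) false.

Definition wordmx (S : pzRingType) (k : nat) (X Y : 'M[S]_k) (w : seq bool)
  : 'M[S]_k := foldr (fun b M => (if b then X else Y) *m M) 1%:M w.

Definition nceval (R : comNzRingType) (N k : nat) (p : ncpoly R)
  (X Y : 'M[{mpoly R[N]}]_k) : 'M[{mpoly R[N]}]_k :=
  \sum_(l < (ncbound p).+1) \sum_(w : l.-tuple bool)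
     (nccoef p w)%:MP *: wordmx X Y w.

(* nc representation: the 2k^2 variables x_0..x_(2k^2-1) are placed    *)
(* in X (tag true) and Y (tag false) via a bijection f, each exactly    *)
(* once.                                                               *)
Definition Xmx (R : comNzRingType) (k : nat)
  (f : bool * 'I_k * 'I_k -> 'I_(2 * k ^ 2)) : 'M[{mpoly R[2 * k ^ 2]}]_k :=
  \matrix_(i, j) 'X_(f (true, i, j)).
Definition Ymx (R : comNzRingType) (k : nat)
  (f : bool * 'I_k * 'I_k -> 'I_(2 * k ^ 2)) : 'M[{mpoly R[2 * k ^ 2]}]_k :=
  \matrix_(i, j) 'X_(f (false, i, j)).

Definition tt_uv (N t : nat) (m : 'X_{1..N}) (u v : 'I_N) : bool :=
  (u != v) && [forall l, m l == (if (l == u) || (l == v) then t else 0%N)].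

Definition tt_mon_in (N t : nat) (P : pred 'I_N) (m : 'X_{1..N}) : bool :=
  [exists u, exists v, [&& tt_uv t m u v, P u & P v]].

Definition tt_mon (N t : nat) (m : 'X_{1..N}) : bool := tt_mon_in t predT m.

Definition one_uv (N e : nat) (m : 'X_{1..N}) (u : 'I_N) : bool :=
  [forall l, m l == (if l == u then e else 0%N)].
Definition one_mon (N e : nat) (m : 'X_{1..N}) : bool := [exists u, one_uv e m u].

Definition diag_var (k : nat) (f : bool * 'I_k * 'I_k -> 'I_(2 * k ^ 2))
  (u : 'I_(2 * k ^ 2)) : bool := [exists b, exists a, u == f (b, a, a)].
Definition offdiag_var (k : nat) (f : bool * 'I_k * 'I_k -> 'I_(2 * k ^ 2))
  (u : 'I_(2 * k ^ 2)) : bool :=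
  [exists b, exists i, exists j, (i != j) && (u == f (b, i, j))].

Definition nterms (R : nzRingType) (N : nat) (q : {mpoly R[N]})
  (Q : 'X_{1..N} -> R -> bool) : nat :=
  count (fun m => Q m q@_m) (msupp q).

Definition nterms_mx (R : nzRingType) (N k : nat) (P : 'M[{mpoly R[N]}]_k)
  (Q : 'X_{1..N} -> R -> bool) : nat :=
  \sum_(ij : 'I_k * 'I_k) nterms (P ij.1 ij.2) Q.

Definition chi (R : nzRingType) (a : R) : nat := (a != 0)%B.

(* The (i, j) entry of a word in X and Y is the sum of the monomials recording the edges
   of the walks from i to j in the complete digraph on k vertices with a loop at every
   vertex, each edge doubled: the entry (a, c) of X is the edge (true, a, c), that of Y
   the edge (false, a, c).  Flow conservation shows that a monomial x_u^t x_v^t or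
   x_u^(2t) only arises from a closed walk at i, hence only on the diagonal, and that its
   edges form a 2-cycle i -> x -> i, two loops at i, or one loop at i.  Around a 2-cycle
   with x <> i the walk is forced, so the coefficient is that of one of the alternating
   words (XY)^t, (YX)^t, X^(2t), Y^(2t); two loops collect every word with t letters of
   each kind, giving phi(t, t); one loop gives e3 or e4.  Counting over the k - 1 choices
   of x and the k diagonal entries yields all the claims, the distinctness of e1, ..., e4
   making each nonzero coefficient value come from exactly one word. *)

From HB Require Import structures.
From mathcomp Require Import all_boot all_order all_algebra.
From mathcomp Require Import reals.
From mathcomp Require Import mpoly.
From mathcomp Require Import zify.
Import GRing.Theory Num.Theory.
Local Open Scope ring_scope.
Set Implicit Arguments.
Unset Strict Implicit.
Unset Printing Implicit Defensive.

Lemma mcoeffXM (R : comNzRingType) (N : nat) (x : 'I_N) (q : {mpoly R[N]}) m :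
  ('X_x * q)@_m = if m x != 0%N then q@_(m - U_(x))%MM else 0.
Proof.
rewrite -(commr_mpolyX _ q); case: ifP => hm.
  have hle : (U_(x) <= m)%MM by rewrite lep1mP.
  by rewrite -{1}(submK hle) addmC mcoeffMX.
apply/eqP; rewrite mcoeff_eq0; apply/negP; rewrite (perm_mem (msuppMX _ _)).
by case/mapP => m' _ hmm; move: hm; rewrite hmm mnmDE mnm1E eqxx.
Qed.

Lemma mnmB_leq N (m1 m2 : 'X_{1..N}) l : ((m1 - m2)%MM l <= m1 l)%N.
Proof. by rewrite mnmBE leq_subr. Qed.

Lemma mnm_subU_eq N (m : 'X_{1..N}) u m' :
  ((m u != 0%N) && ((m - U_(u))%MM == m')) = (m == (U_(u) + m')%MM).
Proof.
apply/idP/eqP => [/andP [hu /eqP <-]|->]; first by rewrite addmC submK // lep1mP.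
by rewrite mnmDE mnm1E eqxx addmC addmK eqxx.
Qed.

Lemma mnm_pow2E N (u v l : 'I_N) t :
  (U_(u) *+ t + U_(v) *+ t)%MM l = (t * (u == l) + t * (v == l))%N.
Proof. by rewrite mnmDE !mulmnE !mnm1E mulnC [X in (_ + X)%N]mulnC. Qed.

Lemma tt_uvE N t m (u v : 'I_N) :
  tt_uv t m u v = (u != v) && (m == (U_(u) *+ t + U_(v) *+ t)%MM).
Proof.
rewrite /tt_uv; case: (eqVneq u v) => [//|huv] /=.
have indicator l : (if (l == u) || (l == v) then t else 0%N)
    = (t * (u == l) + t * (v == l))%N.
  rewrite (eq_sym u) (eq_sym v).
  case: (eqVneq l u) => [->|_]; first by rewrite (negbTE huv) /=; lia.
  by case: (l == v) => /=; lia.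
apply/forallP/eqP => [H|-> l]; last by rewrite mnm_pow2E indicator.
by apply/mnmP => l; rewrite mnm_pow2E -indicator; apply/eqP.
Qed.

Lemma one_uvE N e m (u : 'I_N) : one_uv e m u = (m == (U_(u) *+ e)%MM).
Proof.
rewrite /one_uv; apply/forallP/eqP => [H|-> l].
  apply/mnmP => l; rewrite mulmnE mnm1E (eq_sym u); move/eqP: (H l) ->.
  by case: (l == u); rewrite ?mul1n.
by rewrite mulmnE mnm1E (eq_sym u); case: (l == u); rewrite ?mul1n.
Qed.

Lemma tt_mon_inW N t (P : pred 'I_N) m : tt_mon_in t P m -> tt_mon t m.
Proof.
case/existsP => u /existsP [v /and3P [h _ _]].
by apply/existsP; exists u; apply/existsP; exists v; rewrite h.
Qed.

Lemma tt_mon_vars N (u v a b : 'I_N) t : (0 < t)%N -> u != v ->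
  (U_(u) *+ t + U_(v) *+ t)%MM = (U_(a) *+ t + U_(b) *+ t)%MM -> (u == a) || (u == b).
Proof.
move=> ht huv /mnmP /(_ u).
rewrite !mnm_pow2E eqxx (eq_sym v) (negbTE huv) !(eq_sym _ u).
by case: (u == a); case: (u == b) => //=; lia.
Qed.

Lemma nterms_eq (R : nzRingType) N (q : {mpoly R[N]}) (Q : 'X_{1..N} -> R -> bool)
    (S : pred 'X_{1..N}) (L : seq 'X_{1..N}) :
  (forall m c, Q m c -> S m) -> uniq L ->
  (forall m, (m \in L) = S m && (q@_m != 0)) ->
  nterms q Q = count (fun m => Q m q@_m) L.
Proof.
move=> QS uL HL; rewrite /nterms.
have -> : count (fun m => Q m q@_m) (msupp q) =
          count (fun m => Q m q@_m) [seq m <- msupp q | S m].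
  rewrite count_filter; apply: eq_count => m /=.
  by case h: (Q m q@_m); rewrite ?(QS _ _ h).
apply/permP/uniq_perm => //; first by rewrite filter_uniq // msupp_uniq.
by move=> m; rewrite mem_filter HL mcoeff_msupp andbC.
Qed.

Lemma nterms_mx_const (R : nzRingType) N k (P : 'M[{mpoly R[N]}]_k)
    (Q : 'X_{1..N} -> R -> bool) n :
  (forall i j, i != j -> nterms (P i j) Q = 0%N) ->
  (forall i, nterms (P i i) Q = n) -> nterms_mx P Q = (k * n)%N.
Proof.
move=> Hoff Hdiag; rewrite /nterms_mx -(pair_big xpredT xpredT (fun i j => nterms (P i j) Q)) /=.
rewrite (eq_bigr (fun _ => n)) ?sum_nat_const ?card_ord // => i _.
rewrite (bigD1 i) //= Hdiag big1 ?addn0 // => j hj.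
by rewrite Hoff // eq_sym.
Qed.

Lemma count_eq_nseq (w : seq bool) n b :
  (count (pred1 b) w == n) && (count (pred1 (~~ b)) w == 0%N) = (w == nseq n b).
Proof.
elim: w n => [|x w IH] [|n] //=; rewrite ?eqseq_cons -?IH;
  by case: b {IH}; case: x; rewrite /= ?add0n ?add1n ?eqSS ?andbF.
Qed.

Lemma count_sumn (T : Type) (a : pred T) (s : seq T) : count a s = (\sum_(x <- s) a x)%N.
Proof. by rewrite -sum1_count big_mkcond. Qed.

Lemma sum_nccoef_eq (R : nzRingType) (p : ncpoly R) w0 :
  \sum_(l < (ncbound p).+1) \sum_(w : l.-tuple bool)
     nccoef p w * (tval w == w0)%:R = nccoef p w0.
Proof.
have inner l : \sum_(w : l.-tuple bool) nccoef p w * (tval w == w0)%:R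
    = if size w0 == l then nccoef p w0 else 0.
  case: (boolP (size w0 == l)) => hs.
    rewrite (bigD1 (Tuple hs)) //= eqxx mulr1 big1 ?addr0 // => w hw.
    case: (tval w =P w0) => [E|_]; last by rewrite mulr0.
    by case/eqP: hw; apply: val_inj; rewrite /= E.
  rewrite big1 // => w _; case: (tval w =P w0) => [E|_]; last by rewrite mulr0.
  by rewrite -E size_tuple eqxx in hs.
under eq_bigr => l _ do rewrite inner.
case: (leqP (size w0) (ncbound p)) => h.
  rewrite (bigD1 (Ordinal (h : size w0 < (ncbound p).+1)%N)) //= eqxx.
  rewrite big1 ?addr0 // => l hl; rewrite ifN //.
  by apply: contra hl => /eqP e; apply/eqP/val_inj; rewrite /= e.
rewrite ncboundP // big1 // => l _; rewrite ifN //.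
by apply/negP => /eqP e; move: h (ltn_ord l); rewrite e => /leq_trans H /H; rewrite ltnn.
Qed.

Lemma sum_nccoef_count (R : nzRingType) (p : ncpoly R) a b :
  \sum_(l < (ncbound p).+1) \sum_(w : l.-tuple bool)
     nccoef p w * ((count id w == a) && (count negb w == b))%:R = ncphi p a b.
Proof.
have size_count (w : seq bool) : (count id w + count negb w)%N = size w.
  by rewrite -(count_predC id w).
have inner l : \sum_(w : l.-tuple bool)
     nccoef p w * ((count id w == a) && (count negb w == b))%:R
   = if l == (a + b)%N then \sum_(w : l.-tuple bool | count id w == a) nccoef p w
     else 0.
  case: (boolP (l == (a + b)%N)) => hl.
    rewrite [RHS]big_mkcond; apply: eq_bigr => w _.
    case: (count id w =P a) => ha /=; last by rewrite mulr0.
    have -> : count negb w = b by move: (size_count w) (eqP hl); rewrite size_tuple ha; lia.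
    by rewrite eqxx mulr1.
  rewrite big1 // => w _.
  case: (count id w =P a) => ha /=; last by rewrite mulr0.
  case: (count negb w =P b) => hb /=; last by rewrite mulr0.
  by move: (size_count w) hl; rewrite size_tuple ha hb => E /eqP; lia.
under eq_bigr => l _ do rewrite inner.
rewrite /ncphi; case: (leqP (a + b) (ncbound p)) => h.
  rewrite (bigD1 (Ordinal (h : a + b < (ncbound p).+1)%N)) //= eqxx -[RHS]addr0.
  by congr (_ + _); apply: big1 => l hl; rewrite ifN.
rewrite big1; last first.
  move=> l _; rewrite ifN //.
  by apply/negP => /eqP e; move: h (ltn_ord l); rewrite e => /leq_trans H /H; rewrite ltnn.
by symmetry; apply: big1 => w _; apply: ncboundP; rewrite size_tuple.
Qed.

Section Walks.
Variables (R : comNzRingType) (k : nat) (f : bool * 'I_k * 'I_k -> 'I_(2 * k ^ 2)).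
Hypothesis f_inj : injective f.
Local Notation N := (2 * k ^ 2)%N.
Local Notation X := (Xmx R f).
Local Notation Y := (Ymx R f).
Local Notation W w := (wordmx X Y w).

Lemma wordmx_cons b w i j : W (b :: w) i j = \sum_a 'X_(f (b, i, a)) * W w a j.
Proof. by rewrite /wordmx /= mxE; apply: eq_bigr => a _; case: b; rewrite mxE. Qed.

Lemma mcoeff_wordmx_cons b w i j m : (W (b :: w) i j)@_m =
  \sum_a (if m (f (b, i, a)) != 0%N then (W w a j)@_(m - U_(f (b, i, a)))%MM else 0).
Proof. by rewrite wordmx_cons raddf_sum; apply: eq_bigr => a _; apply: mcoeffXM. Qed.

Lemma mcoeff_wordmx_nil i j m : (W [::] i j)@_m = ((i == j) && (m == 0%MM))%:R.
Proof.
rewrite /wordmx /= mxE; case: (i == j) => /=; first by rewrite mcoeff1.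
by rewrite mcoeff0.
Qed.

Lemma mcoeff_wordmx_cons_neq0 b w i j m : (W (b :: w) i j)@_m != 0 ->
  exists a, (m (f (b, i, a)) != 0%N) && ((W w a j)@_(m - U_(f (b, i, a)))%MM != 0).
Proof.
rewrite mcoeff_wordmx_cons => H; apply/existsP; move: H; apply: contraR.
rewrite negb_exists => /forallP H; apply/eqP/big1 => a _.
by move: (H a); case: ifP => //= _ /negPn/eqP.
Qed.

Lemma mcoeff_wordmx_nil_neq0 i j m : (W [::] i j)@_m != 0 -> i = j /\ m = 0%MM.
Proof.
by rewrite mcoeff_wordmx_nil; case: (i =P j) => [->|]; case: (m =P 0%MM) => //=;
  rewrite eqxx.
Qed.

Definition outdeg (m : 'X_{1..N}) (x : 'I_k) : nat :=
  \sum_(e : bool * 'I_k * 'I_k | (e.1.2 == x) && (e.2 != x)) m (f e).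
Definition indeg (m : 'X_{1..N}) (x : 'I_k) : nat :=
  \sum_(e : bool * 'I_k * 'I_k | (e.2 == x) && (e.1.2 != x)) m (f e).

Lemma sum_mnm1_f e (P : pred (bool * 'I_k * 'I_k)) :
  (\sum_(e' | P e') U_(f e)%MM (f e') = P e)%N.
Proof.
under eq_bigr => e' _ do rewrite mnm1E (inj_eq f_inj).
case: (boolP (P e)) => Pe.
  by rewrite (bigD1 e) //= eqxx big1 // => e' /andP [_ /negbTE]; rewrite eq_sym => ->.
by rewrite big1 // => e' Pe'; case: eqP => // ee; rewrite ee Pe' in Pe.
Qed.

Lemma outdegD m1 m2 x : outdeg (m1 + m2)%MM x = (outdeg m1 x + outdeg m2 x)%N.
Proof. by rewrite /outdeg -big_split; apply: eq_bigr => e _; rewrite mnmDE. Qed.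
Lemma indegD m1 m2 x : indeg (m1 + m2)%MM x = (indeg m1 x + indeg m2 x)%N.
Proof. by rewrite /indeg -big_split; apply: eq_bigr => e _; rewrite mnmDE. Qed.
Lemma outdegMn m n x : outdeg (m *+ n)%MM x = (outdeg m x * n)%N.
Proof. by rewrite /outdeg big_distrl; apply: eq_bigr => e _; rewrite mulmnE. Qed.
Lemma indegMn m n x : indeg (m *+ n)%MM x = (indeg m x * n)%N.
Proof. by rewrite /indeg big_distrl; apply: eq_bigr => e _; rewrite mulmnE. Qed.
Lemma outdegU e x : outdeg U_(f e)%MM x = (e.1.2 == x) && (e.2 != x).
Proof. exact: (sum_mnm1_f e (fun e => (e.1.2 == x) && (e.2 != x))). Qed.
Lemma indegU e x : indeg U_(f e)%MM x = (e.2 == x) && (e.1.2 != x).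
Proof. exact: (sum_mnm1_f e (fun e => (e.2 == x) && (e.1.2 != x))). Qed.
Lemma outdeg0 x : outdeg 0%MM x = 0%N.
Proof. by rewrite /outdeg big1 // => e _; rewrite mnm0E. Qed.
Lemma indeg0 x : indeg 0%MM x = 0%N.
Proof. by rewrite /indeg big1 // => e _; rewrite mnm0E. Qed.

(* Flow conservation: the edges recorded by a monomial of W w i j form a walk from i to j. *)
Lemma mcoeff_wordmx_flow w i j m : (W w i j)@_m != 0 ->
  forall x, (outdeg m x + (x == j) = indeg m x + (x == i))%N.
Proof.
elim: w i m => [|b w IH] i m.
  by move/mcoeff_wordmx_nil_neq0 => [-> ->] x; rewrite outdeg0 indeg0.
move/mcoeff_wordmx_cons_neq0 => [a /andP [ha hc]] x.
have := IH _ _ hc x.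
have hm : m = ((m - U_(f (b, i, a))) + U_(f (b, i, a)))%MM by rewrite submK // lep1mP.
rewrite {3 4}hm outdegD indegD outdegU indegU /=.
move: (outdeg _ x) (indeg _ x) => o n.
rewrite (eq_sym i) (eq_sym a).
by case: (x =P i) => hxi; case: (x =P a) => hxa; case: (i =P a) => hia;
  simpl; try (subst; congruence); lia.
Qed.

Lemma mcoeff_wordmx_loop_closed w i j m : (W w i j)@_m != 0 ->
  (forall b c, m (f (b, i, c)) != 0%N -> c = i) ->
  forall e, m (f e) != 0%N -> e.1.2 = i.
Proof.
elim: w i m => [|b w IH] i m.
  by move/mcoeff_wordmx_nil_neq0 => [_ ->] _ e; rewrite mnm0E.
move/mcoeff_wordmx_cons_neq0 => [a /andP [ha hc]] loops.
have ai : a = i by apply: (loops b).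
subst a => e he.
case: (boolP ((m - U_(f (b, i, i)))%MM (f e) != 0%N)) => h'.
  apply: (IH _ _ hc _ _ h') => b' c hh; apply: (loops b').
  by move: hh; apply: contraNneq => h0; rewrite mnmBE h0.
move: h'; rewrite negbK mnmBE mnm1E (inj_eq f_inj) subn_eq0.
by case: eqP => [<- //|_]; rewrite leqn0 => h0; rewrite h0 in he.
Qed.

Lemma mcoeff_wordmx_first_edge w i j m : (W w i j)@_m != 0 -> m != 0%MM ->
  exists b c, m (f (b, i, c)) != 0%N.
Proof.
case: w => [|b w]; first by move/mcoeff_wordmx_nil_neq0 => [_ ->]; rewrite eqxx.
by move/mcoeff_wordmx_cons_neq0 => [a /andP [ha _]] _; exists b, a.
Qed.

Definition loopmon (i : 'I_k) (w : seq bool) : 'X_{1..N} :=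
  (U_(f (true, i, i)) *+ count id w + U_(f (false, i, i)) *+ count negb w)%MM.

Lemma loopmon_cons b w i : loopmon i (b :: w) = (U_(f (b, i, i)) + loopmon i w)%MM.
Proof. by apply/mnmP => l; rewrite /loopmon /= !mnmDE !mulmnE !mnm1E; case: b => /=; lia. Qed.

Lemma loopmon_nil i : loopmon i [::] = 0%MM.
Proof. by apply/mnmP => l; rewrite /loopmon /= !mnmDE !mulmnE ?mnm0E !muln0. Qed.

Lemma mcoeff_wordmx_loops w i (m : 'X_{1..N}) :
  (forall l, (forall b, l != f (b, i, i)) -> m l = 0%N) ->
  (W w i i)@_m = (m == loopmon i w)%:R.
Proof.
elim: w m => [|b w IH] m hm; first by rewrite mcoeff_wordmx_nil eqxx loopmon_nil.
rewrite mcoeff_wordmx_cons (bigD1 i) //= big1 => [|c hc]; last first.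
  rewrite hm ?eqxx // => b'; rewrite (inj_eq f_inj) xpair_eqE /= negb_and.
  by rewrite hc orbT.
rewrite addr0 loopmon_cons -mnm_subU_eq; case: ifP => //= _.
rewrite IH // => l hl; apply/eqP; rewrite -leqn0.
by apply: leq_trans (mnmB_leq _ _ _) _; rewrite hm.
Qed.

Fixpoint altword (b1 b2 : bool) n := if n is n'.+1 then b1 :: altword b2 b1 n' else [::].
Fixpoint altend (p q : 'I_k) n := if n is n'.+1 then altend q p n' else p.
Definition altmon (u v : 'I_N) n := (U_(u) *+ uphalf n + U_(v) *+ n./2)%MM.

Lemma altmonS u v n : altmon u v n.+1 = (U_(u) + altmon v u n)%MM.
Proof. by apply/mnmP => l; rewrite /altmon /= !mnmDE !mulmnE !mnm1E; lia. Qed.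
Lemma altmon0 u v : altmon u v 0 = 0%MM.
Proof. by apply/mnmP => l; rewrite /altmon /= !mnmDE !mulmnE ?mnm0E !muln0. Qed.

(* Along the two edges p -> q -> p the walk is forced, so only alternating words survive. *)
Lemma mcoeff_wordmx_digon w p q lp lq (m : 'X_{1..N}) j : p != q ->
  (forall l, l != f (lp, p, q) -> l != f (lq, q, p) -> m l = 0%N) ->
  (W w p j)@_m = ([&& w == altword lp lq (size w), j == altend p q (size w) &
                     m == altmon (f (lp, p, q)) (f (lq, q, p)) (size w)])%:R.
Proof.
elim: w p q lp lq m => [|b w IH] p q lp lq m hpq hm.
  by rewrite mcoeff_wordmx_nil altmon0 /= (eq_sym j).
have hne b' c : f (b', p, c) != f (lq, q, p).
  by rewrite (inj_eq f_inj); apply/negP => /eqP [_ hp _]; rewrite hp eqxx in hpq.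
rewrite mcoeff_wordmx_cons (bigD1 q) //= big1 => [|c hc]; last first.
  rewrite hm ?hne //= (inj_eq f_inj); apply/negP => /eqP [_ hc'].
  by rewrite hc' eqxx in hc.
rewrite addr0 eqseq_cons altmonS.
case: (eqVneq b lp) => [->|hb] /=; last first.
  rewrite hm ?hne //= (inj_eq f_inj); apply/negP => /eqP [hb'].
  by rewrite hb' eqxx in hb.
rewrite -mnm_subU_eq /=; case: ifP => h /=; last by rewrite !andbF.
rewrite (IH q p lq lp) 1?eq_sym // => l h1 h2; apply/eqP; rewrite -leqn0.
by apply: leq_trans (mnmB_leq _ _ _) _; rewrite hm.
Qed.

(* The edges of the 2-cycle [i -> x -> i], each taken [t] times; two loops when [x = i]. *)
Definition digon t b1 b2 i x : 'X_{1..N} :=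
  (U_(f (b1, i, x)) *+ t + U_(f (b2, x, i)) *+ t)%MM.

Lemma outdeg_pair e1 e2 n1 n2 x :
  outdeg (U_(f e1) *+ n1 + U_(f e2) *+ n2)%MM x =
  (((e1.1.2 == x) && (e1.2 != x)) * n1 + ((e2.1.2 == x) && (e2.2 != x)) * n2)%N.
Proof. by rewrite outdegD !outdegMn !outdegU. Qed.
Lemma indeg_pair e1 e2 n1 n2 x :
  indeg (U_(f e1) *+ n1 + U_(f e2) *+ n2)%MM x =
  (((e1.2 == x) && (e1.1.2 != x)) * n1 + ((e2.2 == x) && (e2.1.2 != x)) * n2)%N.
Proof. by rewrite indegD !indegMn !indegU. Qed.

Lemma mnm_pair_supp e1 e2 n1 n2 e :
  (U_(f e1) *+ n1 + U_(f e2) *+ n2)%MM (f e) != 0%N -> e = e1 \/ e = e2.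
Proof.
rewrite mnmDE !mulmnE !mnm1E !(inj_eq f_inj).
case: (e1 =P e) => [->|_]; first by left.
by case: (e2 =P e) => [->|_]; [right|rewrite /=; lia].
Qed.

Lemma mcoeff_wordmx_tt_nonloop b1 a1 c1 b2 a2 c2 t w i j : (2 <= t)%N -> a1 != c1 ->
  (W w i j)@_(U_(f (b1, a1, c1)) *+ t + U_(f (b2, a2, c2)) *+ t)%MM != 0 ->
  [/\ a2 = c1, c2 = a1, i = j & (i = a1 \/ i = a2)].
Proof.
move=> ht hac H; have flow := mcoeff_wordmx_flow H.
have h1 := flow a1; rewrite outdeg_pair indeg_pair /= eqxx (eq_sym c1) (negbTE hac) /= in h1.
have hc2 : c2 = a1.
  by move: h1; case: (c2 =P a1) => // _ /=; case: (a1 == j); case: (a1 == i);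
    case: (a2 == a1) => /=; lia.
subst c2.
have ha2 : a2 != a1.
  by move: h1; rewrite eqxx /=; case: (a2 =P a1) => //= _; case: (a1 == j);
    case: (a1 == i); lia.
have h2 := flow a2; rewrite outdeg_pair indeg_pair /= eqxx (eq_sym a1) (negbTE ha2) /= in h2.
have hc1 : c1 = a2.
  by move: h2; case: (c1 =P a2) => // _ /=; case: (a2 == j); case: (a2 == i); lia.
subst c1.
have hij : i = j.
  have := flow i; rewrite outdeg_pair indeg_pair /= eqxx.
  by case: (i =P j) => // _; case: (a1 == i); case: (a2 == i) => /=; lia.
split => //.
have [|b [c]] := mcoeff_wordmx_first_edge H.
  apply/negP => /eqP /mnmP /(_ (f (b1, a1, a2))).
  by rewrite mnm0E mnmDE !mulmnE mnm1E eqxx /=; lia.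
by case/mnm_pair_supp => [[_ <- _]|[_ <- _]]; [left|right].
Qed.

Lemma mcoeff_wordmx_tt b1 a1 c1 b2 a2 c2 t w i j : (2 <= t)%N ->
  (W w i j)@_(U_(f (b1, a1, c1)) *+ t + U_(f (b2, a2, c2)) *+ t)%MM != 0 ->
  i = j /\ exists b b' x,
    (U_(f (b1, a1, c1)) *+ t + U_(f (b2, a2, c2)) *+ t)%MM = digon t b b' i x.
Proof.
move=> ht H.
case: (boolP (a1 != c1)) => [hac|/negPn/eqP hac].
  have [-> -> <- [->|->]] := mcoeff_wordmx_tt_nonloop ht hac H; split => //.
    by exists b1, b2, c1.
  by exists b2, b1, a1; rewrite /digon addmC.
subst c1; case: (boolP (a2 != c2)) => [hac|/negPn/eqP hac].
  rewrite addmC in H; have [h1 h2 _ _] := mcoeff_wordmx_tt_nonloop ht hac H.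
  by rewrite -h1 h2 eqxx in hac.
subst c2.
have hij : i = j.
  have := mcoeff_wordmx_flow H i; rewrite outdeg_pair indeg_pair /= !andbN /= eqxx.
  by case: (i =P j).
have hloop b c : (U_(f (b1, a1, a1)) *+ t + U_(f (b2, a2, a2)) *+ t)%MM (f (b, i, c))
    != 0%N -> c = i.
  by case/mnm_pair_supp => [[_ <- ->]|[_ <- ->]].
have start := mcoeff_wordmx_loop_closed H hloop.
have ha1 : a1 = i by apply: (start (b1, a1, a1)); rewrite mnmDE !mulmnE mnm1E eqxx /=; lia.
have ha2 : a2 = i by apply: (start (b2, a2, a2)); rewrite mnmDE !mulmnE !mnm1E eqxx /=; lia.
by subst a1 a2; split => //; exists b1, b2, i.
Qed.

Lemma mcoeff_wordmx_pow b a c n w i j : (2 <= n)%N ->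
  (W w i j)@_(U_(f (b, a, c)) *+ n)%MM != 0 ->
  i = j /\ (U_(f (b, a, c)) *+ n)%MM = (U_(f (b, i, i)) *+ n)%MM.
Proof.
move=> hn H; have flow := mcoeff_wordmx_flow H.
case: (boolP (a != c)) => [hac|/negPn/eqP hac].
  have := flow a; rewrite outdegMn indegMn outdegU indegU /= eqxx (eq_sym c) (negbTE hac) /=.
  by case: (a == j); case: (a == i); lia.
subst c.
have hij : i = j.
  have := flow i; rewrite outdegMn indegMn outdegU indegU /= andbN /= eqxx.
  by case: (i =P j).
have hloop b' c : (U_(f (b, a, a)) *+ n)%MM (f (b', i, c)) != 0%N -> c = i.
  rewrite mulmnE mnm1E (inj_eq f_inj).
  case: ((b, a, a) =P (b', i, c)) => [E|_] /=; last by rewrite ?mul0n.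
  by case: E => _ h1 h2; congruence.
have := mcoeff_wordmx_loop_closed H hloop (e := (b, a, a)); rewrite /= => -> //.
by rewrite mulmnE mnm1E eqxx /=; lia.
Qed.

Lemma mcoeff_nceval (p : ncpoly R) i j m :
  (nceval p X Y i j)@_m =
  \sum_(l < (ncbound p).+1) \sum_(w : l.-tuple bool) nccoef p w * (W w i j)@_m.
Proof.
rewrite /nceval summxE raddf_sum; apply: eq_bigr => l _.
rewrite summxE raddf_sum; apply: eq_bigr => w _.
by rewrite mxE; apply: mcoeffCM.
Qed.

Lemma mcoeff_nceval_neq0 (p : ncpoly R) i j m : (nceval p X Y i j)@_m != 0 ->
  exists w, (W w i j)@_m != 0.
Proof.
rewrite mcoeff_nceval => H.
have [/existsP [l /existsP [w nz]]|none] :=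
  boolP [exists l : 'I_(ncbound p).+1, [exists w : l.-tuple bool, (W w i j)@_m != 0]].
  by exists w.
case/eqP: H; apply: big1 => l _; apply: big1 => w _.
move: none; rewrite negb_exists => /forallP /(_ l).
by rewrite negb_exists => /forallP /(_ w) /negPn /eqP ->; rewrite mulr0.
Qed.

Lemma loopmon_eq i a b w :
  ((U_(f (true, i, i)) *+ a + U_(f (false, i, i)) *+ b)%MM == loopmon i w)
  = (count id w == a) && (count negb w == b).
Proof.
apply/eqP/andP => [/mnmP E|[/eqP <- /eqP <-] //].
have neq : f (false, i, i) != f (true, i, i) by rewrite (inj_eq f_inj).
have := E (f (true, i, i)); have := E (f (false, i, i)).
rewrite /loopmon !mnmDE !mulmnE !mnm1E !eqxx (negbTE neq) eq_sym (negbTE neq) /=.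
by move=> h1 h2; split; apply/eqP; lia.
Qed.

Lemma loopmon_pow b n i w : ((U_(f (b, i, i)) *+ n)%MM == loopmon i w) = (w == nseq n b).
Proof.
have cT : count (pred1 true) w = count id w by apply: eq_count => -[].
have cF : count (pred1 false) w = count negb w by apply: eq_count => -[].
rewrite -count_eq_nseq; case: b => /=.
  by rewrite -[X in X == _](addm0 _) -(mulm0n U_(f (false, i, i))) loopmon_eq cT cF.
by rewrite -[X in X == _](add0m _) -(mulm0n U_(f (true, i, i))) loopmon_eq cT cF andbC.
Qed.

Lemma size_altword b1 b2 n : size (altword b1 b2 n) = n.
Proof. by elim: n b1 b2 => //= n IH b1 b2; rewrite IH. Qed.

Lemma altend_double p q n : altend p q n.*2 = p.
Proof. by elim: n => //= n IH; rewrite doubleS /= IH. Qed.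

Lemma altmon_eq (u v : 'I_N) t l : u != v ->
  ((U_(u) *+ t + U_(v) *+ t)%MM == altmon u v l) = (l == t.*2).
Proof.
move=> huv; apply/idP/idP => [/eqP /mnmP E|/eqP ->]; last first.
  by rewrite /altmon uphalf_double half_double.
have := E u; have := E v.
rewrite /altmon !mnmDE !mulmnE !mnm1E !eqxx (negbTE huv) eq_sym (negbTE huv) /=.
rewrite uphalf_half => h1 h2; apply/eqP; rewrite -[l]odd_double_half.
by move: h1 h2; case: (odd l) => /=; rewrite -!muln2; lia.
Qed.

(* Two loops at [i] are produced by every word with [t] letters [X] and [t] letters [Y]. *)
Lemma mcoeff_nceval_loops (p : ncpoly R) t i :
  (nceval p X Y i i)@_(digon t true false i i) = ncphi p t t.
Proof.
rewrite mcoeff_nceval -sum_nccoef_count; apply: eq_bigr => l _; apply: eq_bigr => w _.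
rewrite mcoeff_wordmx_loops ?loopmon_eq // => l' hl.
rewrite /digon !mnmDE !mulmnE !mnm1E.
by have := hl true; have := hl false; rewrite !(eq_sym l') => /negbTE -> /negbTE ->.
Qed.

Lemma mcoeff_nceval_pow (p : ncpoly R) n b i :
  (nceval p X Y i i)@_(U_(f (b, i, i)) *+ n)%MM = nccoef p (nseq n b).
Proof.
rewrite mcoeff_nceval -sum_nccoef_eq; apply: eq_bigr => l _; apply: eq_bigr => w _.
rewrite mcoeff_wordmx_loops ?loopmon_pow // => l' hl.
by rewrite mulmnE mnm1E; have := hl b; rewrite (eq_sym l') => /negbTE ->.
Qed.

Lemma mcoeff_nceval_digon (p : ncpoly R) t b1 b2 i x : x != i ->
  (nceval p X Y i i)@_(digon t b1 b2 i x) = nccoef p (altword b1 b2 t.*2).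
Proof.
move=> hx.
have huv : f (b1, i, x) != f (b2, x, i).
  by rewrite (inj_eq f_inj); apply/negP => /eqP [_ h _]; rewrite h eqxx in hx.
rewrite mcoeff_nceval -sum_nccoef_eq; apply: eq_bigr => l _; apply: eq_bigr => w _.
rewrite (mcoeff_wordmx_digon _ _ (lp := b1) (lq := b2) (q := x)) ?(eq_sym i) //; last first.
  move=> l' h1 h2; rewrite /digon !mnmDE !mulmnE !mnm1E.
  by rewrite !(eq_sym _ l') (negbTE h1) (negbTE h2).
rewrite altmon_eq //; congr (_ * (nat_of_bool _)%:R).
apply/idP/idP => [/and3P [/eqP hw _ /eqP hs]|/eqP hw]; first by rewrite hw hs.
by rewrite hw size_altword altend_double !eqxx.
Qed.

Lemma digon_inj t b1 b2 x b1' b2' x' i : (0 < t)%N -> x != i ->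
  digon t b1 b2 i x = digon t b1' b2' i x' -> [/\ b1 = b1', b2 = b2' & x = x'].
Proof.
move=> ht hx /mnmP E.
have [hb1 hx'] : b1' = b1 /\ x' = x.
  have := E (f (b1, i, x)); rewrite /digon !mnm_pow2E eqxx.
  have -> : f (b2', x', i) == f (b1, i, x) = false.
    by rewrite (inj_eq f_inj); apply/negP => /eqP [_ h h']; rewrite h' eqxx in hx.
  by case: (f (b1', i, x') =P f (b1, i, x)) => [/f_inj [-> ->] //|] /=; lia.
subst b1' x'; split => //.
have := E (f (b2, x, i)); rewrite /digon !mnm_pow2E eqxx.
have -> : f (b1, i, x) == f (b2, x, i) = false.
  by rewrite (inj_eq f_inj); apply/negP => /eqP [_ h h']; rewrite h eqxx in hx.
by case: (f (b2', x, i) =P f (b2, x, i)) => [/f_inj [->] //|] /=; lia.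
Qed.

Lemma tt_mon_digon t b1 b2 i x : (b1, i, x) != (b2, x, i) -> tt_mon t (digon t b1 b2 i x).
Proof.
move=> h; apply/existsP; exists (f (b1, i, x)); apply/existsP; exists (f (b2, x, i)).
by rewrite tt_uvE (inj_eq f_inj) h eqxx.
Qed.

Lemma offdiag_digon t b1 b2 i x :
  x != i -> tt_mon_in t (offdiag_var f) (digon t b1 b2 i x).
Proof.
move=> hx; apply/existsP; exists (f (b1, i, x)); apply/existsP; exists (f (b2, x, i)).
rewrite tt_uvE (inj_eq f_inj) eqxx andbT; apply/and3P; split.
- by apply/negP => /eqP [_ h _]; rewrite h eqxx in hx.
- by apply/existsP; exists b1; apply/existsP; exists i; apply/existsP; exists x;
    rewrite eq_sym hx eqxx.
- by apply/existsP; exists b2; apply/existsP; exists x; apply/existsP; exists i;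
    rewrite hx eqxx.
Qed.

Lemma diag_digon t b1 b2 i x : (0 < t)%N -> x != i ->
  tt_mon_in t (diag_var f) (digon t b1 b2 i x) = false.
Proof.
move=> ht hx; apply/negbTE/negP => /existsP [u /existsP [v /and3P [h hu _]]].
move: h; rewrite tt_uvE => /andP [huv /eqP E].
have := tt_mon_vars ht huv (esym E).
case/existsP: hu => b /existsP [a /eqP ->]; rewrite !(inj_eq f_inj).
by case/orP => /eqP [_ h1 h2]; rewrite -?h1 -?h2 ?h1 ?h2 eqxx in hx.
Qed.

Lemma offdiag_loops t i : (0 < t)%N ->
  tt_mon_in t (offdiag_var f) (digon t true false i i) = false.
Proof.
move=> ht; apply/negbTE/negP => /existsP [u /existsP [v /and3P [h hu _]]].
move: h; rewrite tt_uvE => /andP [huv /eqP E].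
have := tt_mon_vars ht huv (esym E).
case/existsP: hu => b /existsP [a /existsP [c /andP [hac /eqP ->]]].
by rewrite !(inj_eq f_inj); case/orP => /eqP [_ h1 h2]; rewrite h1 h2 eqxx in hac.
Qed.

Lemma diag_loops t i : tt_mon_in t (diag_var f) (digon t true false i i).
Proof.
apply/existsP; exists (f (true, i, i)); apply/existsP; exists (f (false, i, i)).
rewrite tt_uvE (inj_eq f_inj) eqxx /=; apply/andP; split.
- by apply/existsP; exists true; apply/existsP; exists i.
- by apply/existsP; exists false; apply/existsP; exists i.
Qed.

Section Support.
Hypothesis f_surj : forall u, exists e, u = f e.

Lemma nceval_tt_supp (p : ncpoly R) t i j m :
  (2 <= t)%N -> tt_mon t m -> (nceval p X Y i j)@_m != 0 ->
  i = j /\ (m = digon t true false i i \/ exists b b' x, x != i /\ m = digon t b b' i x).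
Proof.
move=> ht /existsP [u /existsP [v /and3P [huv _ _]]].
move: huv; rewrite tt_uvE => /andP [huv /eqP ->] /mcoeff_nceval_neq0 [w].
have [[[b1 a1] c1] Eu] := f_surj u; have [[[b2 a2] c2] Ev] := f_surj v.
subst u v => H; have [hij [b [b' [x E]]]] := mcoeff_wordmx_tt ht H; split => //.
rewrite E; case: (eqVneq x i) => [hx|hx]; last by right; exists b, b', x.
subst x; left.
have hbb : b != b'.
  apply/negP => /eqP hb; subst b'; move/mnmP: E => /(_ (f (b1, a1, c1))).
  rewrite /digon !mnm_pow2E eqxx.
  have -> : (f (b2, a2, c2) == f (b1, a1, c1)) = false by rewrite eq_sym (negbTE huv).
  by case: (f (b, i, i) == f (b1, a1, c1)) => /=; lia.
by rewrite /digon; move: E hbb; case: b; case: b' => //= _ _; rewrite addmC.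
Qed.

Lemma nceval_pow_supp (p : ncpoly R) n i j m :
  (2 <= n)%N -> one_mon n m -> (nceval p X Y i j)@_m != 0 ->
  i = j /\ exists b, m = (U_(f (b, i, i)) *+ n)%MM.
Proof.
move=> hn /existsP [u]; rewrite one_uvE => /eqP -> /mcoeff_nceval_neq0 [w].
have [[[b a] c] ->] := f_surj u => /(mcoeff_wordmx_pow hn) [-> ->].
by split => //; exists b.
Qed.

Lemma nterms_offdiag_eq0 (p : ncpoly R) t n i j (Q : 'X_{1..N} -> R -> bool) :
  i != j -> (2 <= t)%N -> (2 <= n)%N ->
  (forall m c, Q m c -> tt_mon t m || one_mon n m) ->
  nterms (nceval p X Y i j) Q = 0%N.
Proof.
move=> hij ht hn HQ.
rewrite (@nterms_eq _ _ _ _ (fun m => tt_mon t m || one_mon n m) [::]) //.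
move=> m; apply/esym/negP => /andP [/orP [hm|hm] hc].
  by have [E _] := nceval_tt_supp ht hm hc; rewrite E eqxx in hij.
by have [E _] := nceval_pow_supp hn hm hc; rewrite E eqxx in hij.
Qed.

Lemma nterms_diag_pow (p : ncpoly R) n i (Q : 'X_{1..N} -> R -> bool) (Q1 : pred R) :
  (2 <= n)%N -> (forall m c, Q m c -> one_mon n m) ->
  (forall b c, Q (U_(f (b, i, i)) *+ n)%MM c = Q1 c) ->
  nterms (nceval p X Y i i) Q =
    count (fun c => (c != 0) && Q1 c) [:: nccoef p (nseq n true); nccoef p (nseq n false)].
Proof.
move=> hn QS Q_pow.
pose pow b := (U_(f (b, i, i)) *+ n)%MM.
pose L := [seq pow b | b <- [:: true; false] & nccoef p (nseq n b) != 0].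
have uniq_L : uniq L.
  rewrite map_inj_in_uniq ?filter_uniq // => b b' _ _ /mnmP /(_ (f (b, i, i))).
  rewrite !mulmnE !mnm1E eqxx (inj_eq f_inj).
  by case: ((b', i, i) =P (b, i, i)) => [[->]|] //= _; lia.
have mem_L m : (m \in L) = one_mon n m && ((nceval p X Y i i)@_m != 0).
  apply/idP/idP.
    case/mapP => b; rewrite mem_filter => /andP [nz _] ->.
    rewrite mcoeff_nceval_pow nz andbT; apply/existsP; exists (f (b, i, i)).
    by rewrite one_uvE.
  case/andP => hm hc; have [_ [b E]] := nceval_pow_supp hn hm hc.
  apply/mapP; exists b => //.
  by rewrite E mcoeff_nceval_pow in hc; rewrite mem_filter hc; case: b {E hc}.
rewrite (nterms_eq QS uniq_L mem_L) count_map count_filter /=.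
by rewrite !mcoeff_nceval_pow !Q_pow ![_ && (_ != 0)]andbC.
Qed.

Section DiagonalEntry.
Variables (p : ncpoly R) (t : nat) (i : 'I_k).
Hypothesis ht : (2 <= t)%N.
Local Notation q := (nceval p X Y i i).
Local Notation ph := (ncphi p t t).

Definition tt_coefs := [:: nccoef p (wXY t); nccoef p (wYX t); nccoef p (wX t); nccoef p (wY t)].

Definition altcoef (bb : bool * bool) := nccoef p (altword bb.1 bb.2 t.*2).

Lemma sum_altcoef (F : R -> nat) :
  (\sum_(bb : bool * bool) F (altcoef bb) = \sum_(c <- tt_coefs) F c)%N.
Proof.
have wXYE n : altword true false n.*2 = wXY n by elim: n => //= n ->.
have wYXE n : altword false true n.*2 = wYX n by elim: n => //= n ->.
have nseqE b n : altword b b n = nseq n b by elim: n => //= n ->.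
rewrite -(pair_big xpredT xpredT (fun b1 b2 => F (altcoef (b1, b2)))) /= !big_bool.
by rewrite !big_cons big_nil /altcoef /= wXYE wYXE !nseqE -!mul2n /wX /wY; lia.
Qed.

Definition digon_of (kk : (bool * bool) * 'I_k) := digon t kk.1.1 kk.1.2 i kk.2.

(* At [x = i] the four words collapse to the single monomial of two loops. *)
Definition digon_term (kk : (bool * bool) * 'I_k) : bool :=
  if kk.2 == i then (kk.1 == (true, false)) && (ph != 0) else altcoef kk.1 != 0.

Definition digon_terms : seq 'X_{1..N} :=
  [seq digon_of kk | kk <- enum {: (bool * bool) * 'I_k} & digon_term kk].

Lemma mcoeff_digon_of kk : digon_term kk ->
  q@_(digon_of kk) = if kk.2 == i then ph else altcoef kk.1.
Proof.
case: kk => [[b1 b2] x]; rewrite /digon_term /digon_of /=.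
case: (eqVneq x i) => [->|hx] /=; last by rewrite mcoeff_nceval_digon.
by case/andP => /eqP [-> ->] _; rewrite mcoeff_nceval_loops.
Qed.

Lemma uniq_digon_terms : uniq digon_terms.
Proof.
have ht0 : (0 < t)%N by lia.
rewrite map_inj_in_uniq; first by rewrite filter_uniq // enum_uniq.
move=> [[b1 b2] x] [[b1' b2'] x']; rewrite !mem_filter /digon_term /digon_of /=.
move=> /andP [o1 _] /andP [o2 _].
case: (eqVneq x i) o1 => [->|hx] o1; case: (eqVneq x' i) o2 => [->|hx'] o2.
- by move: o1 o2 => /andP [/eqP [-> ->] _] /andP [/eqP [-> ->] _].
- by move=> E; have [_ _ E'] := digon_inj ht0 hx' (esym E); rewrite E' eqxx in hx'.
- by move=> E; have [_ _ E'] := digon_inj ht0 hx E; rewrite -E' eqxx in hx.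
- by move=> E; have [-> -> ->] := digon_inj ht0 hx E.
Qed.

Lemma mem_digon_terms m : (m \in digon_terms) = tt_mon t m && (q@_m != 0).
Proof.
apply/idP/idP.
  case/mapP => [[[b1 b2] x]]; rewrite mem_filter => /andP [o _] ->.
  rewrite mcoeff_digon_of //; move: o; rewrite /digon_term /digon_of /=.
  case: (eqVneq x i) => [->|hx] /=.
    by case/andP => /eqP [-> ->] ->; rewrite andbT tt_mon_digon // !xpair_eqE.
  move=> ->; rewrite andbT tt_mon_digon //.
  by rewrite !xpair_eqE negb_and hx orbT.
case/andP => htt hc.
have [_ [E|[b1 [b2 [x [hx E]]]]]] := nceval_tt_supp ht htt hc.
  apply/mapP; exists ((true, false), i) => //.
  by rewrite mem_filter mem_enum /digon_term /= !eqxx andbT; rewrite E mcoeff_nceval_loops in hc.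
apply/mapP; exists ((b1, b2), x) => //.
rewrite mem_filter mem_enum /digon_term /= (negbTE hx) andbT.
by rewrite E mcoeff_nceval_digon in hc.
Qed.

Lemma nterms_diag_tt (Q : 'X_{1..N} -> R -> bool) (Qoff Qdiag : pred R) :
  (forall m c, Q m c -> tt_mon t m) ->
  (forall b1 b2 x c, x != i -> Q (digon t b1 b2 i x) c = Qoff c) ->
  (forall c, Q (digon t true false i i) c = Qdiag c) ->
  nterms q Q = ((ph != 0%R) && Qdiag ph +
                k.-1 * count (fun c => (c != 0%R) && Qoff c) (tt_coefs))%N.
Proof.
move=> QS Qoff_digon Qdiag_loops.
rewrite (nterms_eq QS uniq_digon_terms mem_digon_terms) count_map count_filter.
rewrite count_sumn big_enum /= -(pair_big xpredT xpredT
  (fun bb x => (Q (digon_of (bb, x)) q@_(digon_of (bb, x)) && digon_term (bb, x) : nat))) /=.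
have per_pair bb : (\sum_(x < k) (Q (digon_of (bb, x)) q@_(digon_of (bb, x))
                                   && digon_term (bb, x) : nat) =
     (bb == (true, false)) && ((ph != 0%R) && Qdiag ph)
     + k.-1 * ((altcoef bb != 0%R) && Qoff (altcoef bb)))%N.
  rewrite (bigD1 i) //=; congr (_ + _)%N.
    rewrite /digon_term /= eqxx.
    case: (eqVneq bb (true, false)) => [E|]; last by rewrite andbF.
    case: (eqVneq ph 0) => [->|hph] /=; first by rewrite andbF.
    rewrite andbT mcoeff_digon_of; last by rewrite /digon_term /= eqxx E eqxx hph.
    by rewrite /= eqxx /digon_of E /= Qdiag_loops.
  rewrite (eq_bigr (fun _ => ((altcoef bb != 0%R) && Qoff (altcoef bb) : nat))).
    by rewrite sum_nat_const cardC1 card_ord mulnC.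
  move=> x hx; rewrite /digon_term /= (negbTE hx).
  case: (eqVneq (altcoef bb) 0) => [->|hc]; first by rewrite ?eqxx /= ?andbF.
  rewrite /= andbT mcoeff_digon_of /digon_term /= (negbTE hx) //=.
  by rewrite /digon_of Qoff_digon.
rewrite (eq_bigr _ (fun bb _ => per_pair bb)) big_split /= -big_distrr /=.
rewrite (sum_altcoef (fun c => (c != 0%R) && Qoff c)) !big_cons big_nil.
congr (_ + _)%N.
by rewrite (bigD1 (true, false)) //= big1 ?addn0 // => bb /negbTE ->.
Qed.
End DiagonalEntry.
End Support.
End Walks.

Lemma count_nonzero_eq (R : nzRingType) (s : seq R) c : uniq s -> c \in s ->
  count (fun e => (e != 0) && (e == c)) s = chi c.
Proof.
move=> us cs; rewrite /chi; case: eqVneq => [->|nz].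
  by rewrite (eq_count (a2 := pred0)) ?count_pred0 // => e; rewrite andbC; case: eqP => // ->.
transitivity (count_mem c s); last by rewrite count_uniq_mem ?cs.
by apply: eq_count => e /=; case: (e =P c) => [->|]; rewrite ?nz ?andbF.
Qed.

Lemma mul_pred_sq n : (n * n.-1 = n ^ 2 - n)%N.
Proof. by rewrite -subn1 mulnBr muln1 mulnn. Qed.

Section Family.
Variables (R : comNzRingType) (k : nat) (f : bool * 'I_k * 'I_k -> 'I_(2 * k ^ 2)).
Hypothesis f_bij : bijective f.
Variables (p : ncpoly R) (t : nat).
Hypothesis ht : (2 <= t)%N.
Local Notation N := (2 * k ^ 2)%N.
Local Notation P := (nceval p (Xmx R f) (Ymx R f)).
Local Notation ph := (ncphi p t t).
Local Notation Toff := (tt_mon_in t (offdiag_var f)).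
Local Notation Tdiag := (tt_mon_in t (diag_var f)).

Let f_inj : injective f := bij_inj f_bij.
Let f_surj u : exists e, u = f e.
Proof. by case: f_bij => g fK gK; exists (g u); rewrite gK. Qed.
Let t_gt0 : (0 < t)%N. Proof. lia. Qed.
Let two_t : (2 <= 2 * t)%N. Proof. lia. Qed.

Lemma nterms_offdiag (Q : 'X_{1..N} -> R -> bool) i j : i != j ->
  (forall m c, Q m c -> tt_mon t m || one_mon (2 * t) m) -> nterms (P i j) Q = 0%N.
Proof. by move=> hij QS; apply: (nterms_offdiag_eq0 f_inj f_surj _ hij ht two_t QS). Qed.

Lemma nterms_diag_Toff (Q : 'X_{1..N} -> R -> bool) (cp : pred R) i :
  Q =2 (fun m c => Toff m && cp c) ->
  nterms (P i i) Q = (k.-1 * count (fun c => (c != 0%R) && cp c) (tt_coefs p t))%N.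
Proof.
move=> QE; rewrite (nterms_diag_tt f_inj f_surj _ ht (Qoff := cp) (Qdiag := pred0)) ?andbF //.
- by move=> m c; rewrite QE => /andP [/tt_mon_inW].
- by move=> b1 b2 x c hx; rewrite QE offdiag_digon.
- by move=> c; rewrite QE offdiag_loops.
Qed.

Lemma nterms_diag_Tdiag (Q : 'X_{1..N} -> R -> bool) (cp : pred R) i :
  Q =2 (fun m c => Tdiag m && cp c) -> nterms (P i i) Q = ((ph != 0%R) && cp ph)%N.
Proof.
move=> QE; rewrite (nterms_diag_tt f_inj f_surj _ ht (Qoff := pred0) (Qdiag := cp)).
- by rewrite (eq_count (a2 := pred0)) ?count_pred0 ?muln0 ?addn0 // => c; rewrite andbF.
- by move=> m c; rewrite QE => /andP [/tt_mon_inW].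
- by move=> b1 b2 x c hx; rewrite QE diag_digon.
- by move=> c; rewrite QE diag_loops.
Qed.

Lemma nterms_diag_tt_mon i : nterms (P i i) (fun m _ => tt_mon t m) =
  ((ph != 0%R) + k.-1 * count (fun c => c != 0%R) (tt_coefs p t))%N.
Proof.
rewrite (nterms_diag_tt f_inj f_surj _ ht (Qoff := predT) (Qdiag := predT)) //.
- by rewrite andbT (eq_count (a2 := fun c => c != 0)) // => c; rewrite andbT.
- by move=> b1 b2 x c hx; rewrite tt_mon_digon // !xpair_eqE negb_and hx orbT.
- by move=> c; rewrite tt_mon_digon // !xpair_eqE.
Qed.

Lemma nterms_diag_one (Q : 'X_{1..N} -> R -> bool) (cp : pred R) i :
  Q =2 (fun m c => one_mon (2 * t) m && cp c) ->
  nterms (P i i) Q = count (fun c => (c != 0) && cp c) [:: nccoef p (wX t); nccoef p (wY t)].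
Proof.
move=> QE; rewrite (nterms_diag_pow f_inj f_surj _ two_t (Q1 := cp)) //.
- by move=> m c; rewrite QE => /andP [].
- by move=> b c; rewrite QE andb_idl // => _; apply/existsP; exists (f (b, i, i)); rewrite one_uvE.
Qed.

Lemma diag_one_mon_var i m : m \in msupp (P i i) -> one_mon (2 * t) m ->
  exists2 u, one_uv (2 * t) m u & diag_var f u.
Proof.
rewrite mcoeff_msupp => hc hm; have [_ [b ->]] := nceval_pow_supp f_inj f_surj two_t hm hc.
exists (f (b, i, i)); first by rewrite one_uvE.
by apply/existsP; exists b; apply/existsP; exists i.
Qed.

Lemma family_Toff c : uniq (tt_coefs p t) -> c \in tt_coefs p t -> c != 0 ->
  nterms_mx P (fun m a => Toff m && (a == c)) = (k ^ 2 - k)%N.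
Proof.
move=> us cs nz; rewrite (nterms_mx_const (n := k.-1)).
- exact: mul_pred_sq.
- by move=> i j hij; apply: nterms_offdiag => // m a /andP [/tt_mon_inW ->].
- by move=> i; rewrite (nterms_diag_Toff (cp := pred1 c)) // count_nonzero_eq // /chi nz muln1.
Qed.

Lemma family_Tdiag : ph != 0 -> nterms_mx P (fun m a => Tdiag m && (a == ph)) = k.
Proof.
move=> nz; rewrite (nterms_mx_const (n := 1)) ?muln1 //.
- by move=> i j hij; apply: nterms_offdiag => // m a /andP [/tt_mon_inW ->].
- by move=> i; rewrite (nterms_diag_Tdiag (cp := pred1 ph)) //= eqxx nz.
Qed.

Lemma family_one c : uniq [:: nccoef p (wX t); nccoef p (wY t)] ->
  c \in [:: nccoef p (wX t); nccoef p (wY t)] -> c != 0 ->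
  nterms_mx P (fun m a => one_mon (2 * t) m && (a == c)) = k.
Proof.
move=> us cs nz; rewrite (nterms_mx_const (n := 1)) ?muln1 //.
- by move=> i j hij; apply: nterms_offdiag => // m a /andP [-> _]; rewrite orbT.
- by move=> i; rewrite (nterms_diag_one (cp := pred1 c)) // count_nonzero_eq // /chi nz.
Qed.

Lemma family_one_all : nterms_mx P (fun m _ => one_mon (2 * t) m) =
  (chi (nccoef p (wX t)) * k + chi (nccoef p (wY t)) * k)%N.
Proof.
rewrite (nterms_mx_const (n := chi (nccoef p (wX t)) + chi (nccoef p (wY t)))).
- by rewrite mulnDr !(mulnC k).
- by move=> i j hij; apply: nterms_offdiag => // m a ->; rewrite orbT.
- by move=> i; rewrite (nterms_diag_one (cp := predT)) => [|m c]; rewrite /= ?andbT ?addn0.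
Qed.

Lemma family_tt_all : nterms_mx P (fun m _ => tt_mon t m) =
  ((chi (nccoef p (wXY t)) + chi (nccoef p (wYX t)) + chi (nccoef p (wX t))
    + chi (nccoef p (wY t))) * (k ^ 2 - k) + chi ph * k)%N.
Proof.
rewrite (nterms_mx_const (n := (ph != 0%R) + k.-1 * count (fun c => c != 0%R) (tt_coefs p t))).
- rewrite mulnDr mulnA mul_pred_sq /= /chi addn0 !addnA.
  by rewrite addnC mulnC [(k * _)%N]mulnC.
- by move=> i j hij; apply: nterms_offdiag => // m a ->.
- exact: nterms_diag_tt_mon.
Qed.
End Family.
Theorem lemma2p8 (R : realType) (k : nat)
  (f : bool * 'I_k * 'I_k -> 'I_(2 * k ^ 2)) (p : ncpoly R) (d t : nat)
  (e1 e2 e3 e4 : R) :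
  (1 <= k)%N ->
  bijective f ->
  ncdeg p d -> (1 < d)%N ->
  (2 <= t)%N ->
  nccoef p (wXY t) = e1 -> nccoef p (wYX t) = e2 ->
  nccoef p (wX t) = e3 -> nccoef p (wY t) = e4 ->
  uniq [:: e1; e2; e3; e4] ->
  let P := nceval p (Xmx R f) (Ymx R f) in
  let ph := ncphi p t t in
  let Toff := tt_mon_in t (offdiag_var f) in
  let Tdiag := tt_mon_in t (diag_var f) in
  [/\ (e1 != 0 -> nterms_mx P (fun m c => Toff m && (c == e1)) = (k ^ 2 - k)%N),
      (e2 != 0 -> nterms_mx P (fun m c => Toff m && (c == e2)) = (k ^ 2 - k)%N),
      (e3 != 0 -> nterms_mx P (fun m c => Toff m && (c == e3)) = (k ^ 2 - k)%N) &
      (e4 != 0 -> nterms_mx P (fun m c => Toff m && (c == e4)) = (k ^ 2 - k)%N)] /\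
  [/\ (ph != 0 -> nterms_mx P (fun m c => Tdiag m && (c == ph)) = k),
      (e3 != 0 -> nterms_mx P (fun m c => one_mon (2 * t) m && (c == e3)) = k) &
      (e4 != 0 -> nterms_mx P (fun m c => one_mon (2 * t) m && (c == e4)) = k)] /\
  nterms_mx P (fun m _ => one_mon (2 * t) m) = (chi e3 * k + chi e4 * k)%N /\
  nterms_mx P (fun m _ => tt_mon t m)
    = ((chi e1 + chi e2 + chi e3 + chi e4) * (k ^ 2 - k) + chi ph * k)%N /\
  (forall i : 'I_k,
     [/\ nterms (P i i) (fun m _ => Toff m)
           = ((chi e1 + chi e2 + chi e3 + chi e4) * (k - 1))%N,
         nterms (P i i) (fun m _ => Tdiag m) = chi ph,
         nterms (P i i) (fun m c => one_mon (2 * t) m && (c == e3)) = chi e3,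
         nterms (P i i) (fun m c => one_mon (2 * t) m && (c == e4)) = chi e4 &
         (forall m, m \in msupp (P i i) -> one_mon (2 * t) m ->
            exists2 u, one_uv (2 * t) m u & diag_var f u)]) /\
  (forall i j : 'I_k, i != j -> nterms (P i j) (fun m _ => tt_mon t m) = 0%N).
Proof.
move=> _ f_bij _ _ ht <- <- <- <- coefs_uniq P ph Toff Tdiag.
have one_uniq : uniq [:: nccoef p (wX t); nccoef p (wY t)].
  by case/and4P: coefs_uniq => _ _ ne34 _; rewrite /= ne34.
split; first by split=> nz; apply: family_Toff => //; rewrite !inE eqxx ?orbT.
split; first by split=> nz;
  [apply: family_Tdiag|apply: family_one => //; rewrite !inE eqxx ?orbT..].
split; first exact: family_one_all.
split; first exact: family_tt_all.
split=> [i|i j hij]; last by apply: (nterms_offdiag f_bij _ ht) => // m a ->.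
split; last exact: diag_one_mon_var.
- rewrite (nterms_diag_Toff f_bij _ ht (cp := predT)) => [|m a]; last by rewrite andbT.
  by rewrite /= /chi !andbT addn0 !addnA subn1 mulnC.
- by rewrite (nterms_diag_Tdiag f_bij _ ht (cp := predT)) => [|m a]; rewrite ?andbT.
- rewrite (nterms_diag_one f_bij _ ht (cp := pred1 (nccoef p (wX t)))) //.
  by rewrite count_nonzero_eq // !inE eqxx.
- rewrite (nterms_diag_one f_bij _ ht (cp := pred1 (nccoef p (wY t)))) //.
  by rewrite count_nonzero_eq // !inE eqxx orbT.
Qed.
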